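(* Let $n \in \mathbb{N}$, let $\mathbf{A}_1, \dots, \mathbf{A}_n$ be additive categories and let $\mathbf{B}$ be an additive category with cokernels. Then there is an equivalence of categories \[ \mathrm{Hom}_{\mathrm{lin}}\big( (\mathbf{A}_i)_{i=1}^n, \mathbf{B} \big) \simeq \mathrm{Hom}_{\mathrm{lin}}^{\mathrm{cok}}\big( (\mathcal{A}(\mathbf{A}_i))_{i=1}^n, \mathbf{B} \big). \]
   Context: For an additive category $\mathbf{A}$, its Freyd category $\mathcal{A}(\mathbf{A})$ is defined as follows. Objects are morphisms $\rho_a: r_a \to a$ of $\mathbf{A}$, written $(a \xleftarrow{\rho_a} r_a)$. A morphism $(a \xleftarrow{\rho_a} r_a) \to (b \xleftarrow{\rho_b} r_b)$ is given by a morphism $\alpha: a \to b$ in $\mathbf{A}$ for which there exists $\omega: r_a \to r_b$ with $\alpha \circ \rho_a = \rho_b \circ \omega$; two such $\alpha, \alpha'$ are identified if $\alpha - \alpha' = \rho_b \circ \lambda$ for some $\lambda: a \to r_b$. Composition, identities and the additive structure are inherited from $\mathbf{A}$. $\mathcal{A}(\mathbf{A})$ is additive and has cokernels (the cokernel of the morphism given by $\alpha$ above is $(b \xleftarrow{(\rho_b,\ \alpha)} r_b \oplus a)$). A functor between products of additive categories is multilinear if it is additive in each component. A multilinear functor between categories with cokernels is right exact if for each component $k$, fixing all other components at objects, the resulting functor preserves cokernels (the canonical morphism $\operatorname{cok}F(\dots,\alpha_k,\dots) \to F(\dots,\operatorname{cok}\alpha_k,\dots)$ is an isomorphism). $\mathrm{Hom}_{\mathrm{lin}}((\mathbf{A}_i)_i,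 \mathbf{B})$ denotes the category of multilinear functors $\prod_i \mathbf{A}_i \to \mathbf{B}$ with natural transformations as morphisms, and $\mathrm{Hom}_{\mathrm{lin}}^{\mathrm{cok}}((\mathcal{A}(\mathbf{A}_i))_i, \mathbf{B})$ the category of right exact multilinear functors $\prod_i \mathcal{A}(\mathbf{A}_i) \to \mathbf{B}$ with natural transformations as morphisms. *)

(* Setoid-enriched categories: hom-sets carry an equivalence relation [heq],
   all equations are up to [heq].  This is needed because the Freyd category
   has hom-sets that are quotients. *)
From mathcomp Require Import ssreflect ssrfun ssrbool eqtype ssrnat fintype.

Set Implicit Arguments.
Unset Strict Implicit.
Unset Printing Implicit Defensive.

Record Cat := {
  ob :> Type;
  hom : ob -> ob -> Type;
  heq : forall a b, hom a b -> hom a b -> Prop;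
  comp : forall a b c, hom b c -> hom a b -> hom a c;
  idm : forall a, hom a a }.

Arguments hom {_} a b.
Arguments heq {_ a b} f g.
Arguments comp {_ a b c} g f.
Arguments idm {_} a.

Record IsCat (C : Cat) : Prop := {
  heq_refl : forall a b (f : @hom C a b), heq f f;
  heq_sym : forall a b (f g : @hom C a b), heq f g -> heq g f;
  heq_trans : forall a b (f g h : @hom C a b), heq f g -> heq g h -> heq f h;
  comp_resp : forall a b c (f f' : @hom C b c) (g g' : hom a b),
      heq f f' -> heq g g' -> heq (comp f g) (comp f' g');
  comp_assoc : forall a b c d (f : @hom C c d) (g : hom b c) (h : hom a b),
      heq (comp f (comp g h)) (comp (comp f g) h);
  comp_idl : forall a b (f : @hom C a b), heq (comp (idm b) f) f;
  comp_idr : forall a b (f : @hom C a b), heq (comp f (idm a)) f }.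

Arguments heq_refl {C} _ {a b} f.
Arguments heq_sym {C} _ {a b f g}.
Arguments heq_trans {C} _ {a b f g h}.
Arguments comp_resp {C} _ {a b c f f' g g'}.
Arguments comp_assoc {C} _ {a b c d} f g h.
Arguments comp_idl {C} _ {a b} f.
Arguments comp_idr {C} _ {a b} f.

Record PreAdd := {
  pcat :> Cat;
  zero : forall a b : pcat, hom a b;
  add : forall a b : pcat, hom a b -> hom a b -> hom a b }.

Arguments zero {_} a b.
Arguments add {_ a b} f g.

Record IsPreadditive (A : PreAdd) : Prop := {
  pa_cat : IsCat A;
  add_resp : forall a b (f f' g g' : @hom A a b),
      heq f f' -> heq g g' -> heq (add f g) (add f' g');
  addA : forall a b (f g h : @hom A a b), heq (add f (add g h)) (add (add f g) h);
  addC : forall a b (f g : @hom A a b), heq (add f g) (add g f);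
  add0l : forall a b (f : @hom A a b), heq (add (zero a b) f) f;
  addN : forall a b (f : @hom A a b), exists g, heq (add f g) (zero a b);
  comp_addl : forall a b c (f g : @hom A b c) (h : hom a b),
      heq (comp (add f g) h) (add (comp f h) (comp g h));
  comp_addr : forall a b c (h : @hom A b c) (f g : hom a b),
      heq (comp h (add f g)) (add (comp h f) (comp h g)) }.

Arguments add_resp {A} _ {a b f f' g g'}.
Arguments addA {A} _ {a b} f g h.
Arguments addC {A} _ {a b} f g.
Arguments add0l {A} _ {a b} f.
Arguments addN {A} _ {a b} f.
Arguments comp_addl {A} _ {a b c} f g h.
Arguments comp_addr {A} _ {a b c} h f g.

Record IsAdditive (A : PreAdd) : Prop := {
  ad_pre : IsPreadditive A;
  ad_zero : exists z : A,
      (forall a (f g : hom a z), heq f g) /\ (forall a (f g : hom z a), heq f g);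
  ad_biprod : forall a b : A, exists (c : A) (p1 : hom c a) (p2 : hom c b)
      (i1 : hom a c) (i2 : hom b c),
      [/\ heq (comp p1 i1) (idm a), heq (comp p2 i2) (idm b),
          heq (comp p1 i2) (zero b a), heq (comp p2 i1) (zero a b)
        & heq (add (comp i1 p1) (comp i2 p2)) (idm c)] }.

Definition IsCokernel (C : PreAdd) (a b c : C) (f : hom a b) (p : hom b c) : Prop :=
  heq (comp p f) (zero a c) /\
  forall (d : C) (g : hom b d), heq (comp g f) (zero a d) ->
    (exists h : hom c d, heq (comp h p) g) /\
    (forall h h' : hom c d, heq (comp h p) g -> heq (comp h' p) g -> heq h h').

Definition HasCokernels (C : PreAdd) : Prop :=
  forall (a b : C) (f : hom a b), exists (c : C) (p : hom b c), IsCokernel f p.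

Section Freyd.
Variables (A : PreAdd) (HA : IsPreadditive A).

Let hrefl {a b : A} (f : hom a b) := heq_refl (pa_cat HA) f.
Let hsym {a b : A} {f g : hom a b} := @heq_sym _ (pa_cat HA) a b f g.
Let htrans {a b : A} {f g h : hom a b} := @heq_trans _ (pa_cat HA) a b f g h.
Let cresp {a b c : A} {f f' : hom b c} {g g' : hom a b} :=
  @comp_resp _ (pa_cat HA) a b c f f' g g'.
Let cassoc {a b c d : A} (f : hom c d) (g : hom b c) (h : hom a b) :=
  comp_assoc (pa_cat HA) f g h.

Lemma pa_comp_zero_l {a b c : A} (f : hom a b) : heq (comp (zero b c) f) (zero a c).
Proof.
set x := comp (zero b c) f.
have hx : heq x (add x x).
  apply: (htrans _ (comp_addl HA _ _ _)).
  exact: (cresp (hsym (add0l HA _)) (hrefl f)).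
have [g hg] := addN HA x.
apply: hsym; apply: (htrans (hsym hg)).
apply: (htrans (add_resp HA hx (hrefl g)) _).
apply: (htrans (hsym (addA HA _ _ _)) _).
apply: (htrans (add_resp HA (hrefl x) hg) _).
apply: (htrans (addC HA _ _) _); exact: (add0l HA _).
Qed.

Lemma pa_comp_zero_r {a b c : A} (f : hom b c) : heq (comp f (zero a b)) (zero a c).
Proof.
set x := comp f (zero a b).
have hx : heq x (add x x).
  apply: (htrans _ (comp_addr HA _ _ _)).
  exact: (cresp (hrefl f) (hsym (add0l HA _))).
have [g hg] := addN HA x.
apply: hsym; apply: (htrans (hsym hg)).
apply: (htrans (add_resp HA hx (hrefl g)) _).
apply: (htrans (hsym (addA HA _ _ _)) _).
apply: (htrans (add_resp HA (hrefl x) hg) _).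
apply: (htrans (addC HA _ _) _); exact: (add0l HA _).
Qed.

Definition FObj := { a : A & { r : A & hom r a } }.
Definition Fa (X : FObj) : A := projT1 X.
Definition Fr (X : FObj) : A := projT1 (projT2 X).
Definition Frho (X : FObj) : hom (Fr X) (Fa X) := projT2 (projT2 X).

Definition FHom (X Y : FObj) :=
  { f : hom (Fa X) (Fa Y) | exists w : hom (Fr X) (Fr Y),
      heq (comp f (Frho X)) (comp (Frho Y) w) }.

(* alpha ~ alpha' iff alpha - alpha' = rho_b lambda,
   written (without negation) as alpha = alpha' + rho_b lambda *)
Definition FHeq (X Y : FObj) (f g : FHom X Y) : Prop :=
  exists l : hom (Fa X) (Fr Y),
    heq (proj1_sig f) (add (proj1_sig g) (comp (Frho Y) l)).

Lemma Fcomp_ok (X Y Z : FObj) (g : FHom Y Z) (f : FHom X Y) :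
  exists w : hom (Fr X) (Fr Z),
    heq (comp (comp (proj1_sig g) (proj1_sig f)) (Frho X)) (comp (Frho Z) w).
Proof.
case: f => f [w1 h1]; case: g => g [w2 h2] /=.
exists (comp w2 w1).
apply: (htrans (hsym (cassoc _ _ _)) _).
apply: (htrans (cresp (hrefl g) h1) _).
apply: (htrans (cassoc _ _ _) _).
apply: (htrans (cresp h2 (hrefl w1)) _).
exact: (hsym (cassoc _ _ _)).
Qed.

Lemma Fid_ok (X : FObj) :
  exists w : hom (Fr X) (Fr X), heq (comp (idm (Fa X)) (Frho X)) (comp (Frho X) w).
Proof.
exists (idm _).
apply: (htrans (comp_idl (pa_cat HA) _) _).
exact: (hsym (comp_idr (pa_cat HA) _)).
Qed.

Lemma Fzero_ok (X Y : FObj) :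
  exists w : hom (Fr X) (Fr Y),
    heq (comp (zero (Fa X) (Fa Y)) (Frho X)) (comp (Frho Y) w).
Proof.
exists (zero _ _).
apply: (htrans (pa_comp_zero_l _) _).
exact: (hsym (pa_comp_zero_r _)).
Qed.

Lemma Fadd_ok (X Y : FObj) (f g : FHom X Y) :
  exists w : hom (Fr X) (Fr Y),
    heq (comp (add (proj1_sig f) (proj1_sig g)) (Frho X)) (comp (Frho Y) w).
Proof.
case: f => f [w1 h1]; case: g => g [w2 h2] /=.
exists (add w1 w2).
apply: (htrans (comp_addl HA _ _ _) _).
apply: (htrans (add_resp HA h1 h2) _).
exact: (hsym (comp_addr HA _ _ _)).
Qed.

Definition FreydCat : Cat := {|
  ob := FObj;
  hom := FHom;
  heq := FHeq;
  comp := fun X Y Z g f => exist _ _ (Fcomp_ok g f);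
  idm := fun X => exist _ _ (Fid_ok X) |}.

Definition Freyd : PreAdd := {|
  pcat := FreydCat;
  zero := fun X Y => exist _ _ (Fzero_ok X Y) : @hom FreydCat X Y;
  add := fun X Y f g => exist _ _ (Fadd_ok f g) : @hom FreydCat X Y |}.

End Freyd.

Definition upd (I : eqType) (T : I -> Type) (x : forall i, T i) (k : I) (y : T k)
  : forall i, T i :=
  fun i => match eq_comparable k i with
           | left e => eq_rect k T y i e
           | right _ => x i end.

Arguments upd {I T} x k y i.

Definition updm (I : eqType) (C : I -> Cat) (x : forall i, ob (C i)) (k : I)
  (a b : C k) (f : hom a b) :
  forall i, hom (upd x k a i) (upd x k b i) :=
  fun i => match eq_comparable k i as d return
             hom (match d with left e => eq_rect k (fun j => ob (C j)) a i e
                             | right _ => x i end)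
                 (match d with left e => eq_rect k (fun j => ob (C j)) b i e
                             | right _ => x i end) with
           | left e => match e as e0 in _ = j return
                         hom (eq_rect k (fun j => ob (C j)) a j e0)
                             (eq_rect k (fun j => ob (C j)) b j e0) with
                       | erefl => f end
           | right _ => idm (x i) end.

Arguments updm {I C} x k {a b} f i.

Section FunCat.
Variables (I : eqType) (C : I -> PreAdd) (B : PreAdd) (HB : IsCat B).

Record MFun := {
  Fob : (forall i, ob (C i)) -> ob B;
  Fmap : forall x y : (forall i, ob (C i)),
      (forall i, hom (x i) (y i)) -> hom (Fob x) (Fob y) }.

Definition IsMFunctor (F : MFun) : Prop :=
  [/\ (forall x y (f g : forall i, hom (x i) (y i)),
         (forall i, heq (f i) (g i)) -> heq (Fmap F f) (Fmap F g)),
      (forall x, heq (Fmap F (fun i => idm (x i))) (idm (Fob F x)))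
    & (forall x y z (f : forall i, hom (x i) (y i)) (g : forall i, hom (y i) (z i)),
         heq (Fmap F (fun i => comp (g i) (f i))) (comp (Fmap F g) (Fmap F f)))].

Definition Multilinear (F : MFun) : Prop :=
  forall (x : forall i, ob (C i)) (k : I) (a b : C k) (f g : hom a b),
    heq (Fmap F (updm x k (add f g)))
        (add (Fmap F (updm x k f)) (Fmap F (updm x k g))).

Definition RightExact (F : MFun) : Prop :=
  forall (x : forall i, ob (C i)) (k : I) (a b c : C k) (f : hom a b) (p : hom b c),
    IsCokernel f p -> IsCokernel (Fmap F (updm x k f)) (Fmap F (updm x k p)).

Definition NT (F G : MFun) :=
  { eta : forall x, hom (Fob F x) (Fob G x) |
    forall x y (f : forall i, hom (x i) (y i)),
      heq (comp (eta y) (Fmap F f)) (comp (Fmap G f) (eta x)) }.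

Lemma NTcomp_ok (F G H : MFun) (t : NT G H) (s : NT F G) :
  forall x y (f : forall i, hom (x i) (y i)),
    heq (comp (comp (proj1_sig t y) (proj1_sig s y)) (Fmap F f))
        (comp (Fmap H f) (comp (proj1_sig t x) (proj1_sig s x))).
Proof.
case: t => t ht; case: s => s hs /= x y f.
apply: (heq_trans HB (heq_sym HB (comp_assoc HB _ _ _))).
apply: (heq_trans HB (comp_resp HB (heq_refl HB _) (hs _ _ f))).
apply: (heq_trans HB (comp_assoc HB _ _ _)).
apply: (heq_trans HB (comp_resp HB (ht _ _ f) (heq_refl HB _))).
exact: (heq_sym HB (comp_assoc HB _ _ _)).
Qed.

Lemma NTid_ok (F : MFun) :
  forall x y (f : forall i, hom (x i) (y i)),
    heq (comp (idm (Fob F y)) (Fmap F f)) (comp (Fmap F f) (idm (Fob F x))).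
Proof.
move=> x y f; apply: (heq_trans HB (comp_idl HB _)).
exact: (heq_sym HB (comp_idr HB _)).
Qed.

Definition FunCat (P : MFun -> Prop) : Cat := {|
  ob := { F : MFun | P F };
  hom := fun F G => NT (proj1_sig F) (proj1_sig G);
  heq := fun F G s t => forall x, heq (proj1_sig s x) (proj1_sig t x);
  comp := fun F G H t s =>
            exist _ (fun x => comp (proj1_sig t x) (proj1_sig s x)) (NTcomp_ok t s);
  idm := fun F => exist _ (fun x => idm (Fob (proj1_sig F) x)) (NTid_ok (proj1_sig F)) |}.

Definition LinCat : Cat := FunCat (fun F => IsMFunctor F /\ Multilinear F).
Definition LinCokCat : Cat :=
  FunCat (fun F => [/\ IsMFunctor F, Multilinear F & RightExact F]).

End FunCat.

Record Functor (C D : Cat) := {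
  fo : C -> D;
  fm : forall a b : C, hom a b -> hom (fo a) (fo b) }.

Definition IsFunctor (C D : Cat) (F : Functor C D) : Prop :=
  [/\ (forall a b (f g : hom a b), heq f g -> heq (fm F f) (fm F g)),
      (forall a, heq (fm F (idm a)) (idm (fo F a)))
    & (forall a b c (f : hom a b) (g : hom b c),
         heq (fm F (comp g f)) (comp (fm F g) (fm F f)))].

Definition NatIsoId (C D : Cat) (F : Functor C D) (G : Functor D C) : Prop :=
  exists eta : forall a : C, hom (fo G (fo F a)) a,
    (forall a, exists e : hom a (fo G (fo F a)),
        heq (comp (eta a) e) (idm a) /\ heq (comp e (eta a)) (idm _)) /\
    (forall a b (f : hom a b), heq (comp f (eta a)) (comp (eta b) (fm G (fm F f)))).

Definition CatEquiv (C D : Cat) : Prop :=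
  exists (F : Functor C D) (G : Functor D C),
    [/\ IsFunctor F, IsFunctor G, NatIsoId F G & NatIsoId G F].

(* A multilinear [F : prod_i A_i -> B] extends to the Freyd categories by sending a family
   of objects [a_i <-rho_i- r_i] to the joint cokernel of the [n] maps
   [F(a_1, .., rho_j, .., a_n)], built by iterating binary cokernels of [B]. The extension is
   right exact in the [k]-th variable because a cokernel [p] in the Freyd category of [A_k]
   has a section up to relations and to the image of the map it is a cokernel of; computing
   that section uses biproducts in [A_k]. In the other direction a right exact functor is
   restricted along [a |-> (a <-0- a)]. Restricting an extension gives [F] back since on
   these free objects all relations vanish; extending a restriction gives [H] back since each
   [X] is the cokernel of the free morphism [rho_X], so that, by right exactness in one
   variable at a time, [H X] is the same joint cokernel. *)

From mathcomp Require Import ssreflect ssrfun ssrbool eqtype ssrnat fintype.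
From Stdlib Require Import Setoid Morphisms ProofIrrelevance IndefiniteDescription.

Set Implicit Arguments.
Unset Strict Implicit.
Unset Printing Implicit Defensive.

Existing Class IsCat.
Existing Class IsPreadditive.
#[global] Existing Instance pa_cat.

#[global] Instance heq_Equivalence (C : Cat) {HC : IsCat C} (a b : C) :
  Equivalence (@heq C a b).
Proof. by split=> [f|f g|f g h]; [apply: heq_refl|apply: heq_sym|apply: heq_trans]. Qed.

#[global] Instance comp_Proper (C : Cat) {HC : IsCat C} (a b c : C) :
  Proper (heq ==> heq ==> heq) (@comp C a b c).
Proof. by move=> f f' Hf g g' Hg; apply: comp_resp. Qed.

#[global] Instance add_Proper (A : PreAdd) {HA : IsPreadditive A} (a b : A) :
  Proper (heq ==> heq ==> heq) (@add A a b).
Proof. by move=> f f' Hf g g' Hg; apply: add_resp. Qed.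

#[global] Hint Extern 0 (heq _ _) => reflexivity : core.

Section CatTheory.
Context {C : Cat} {HC : IsCat C}.

Lemma comp1m (a b : C) (f : hom a b) : heq (comp (idm b) f) f.
Proof. exact: comp_idl. Qed.

Lemma compm1 (a b : C) (f : hom a b) : heq (comp f (idm a)) f.
Proof. exact: comp_idr. Qed.

Lemma compA (a b c d : C) (f : hom c d) (g : hom b c) (h : hom a b) :
  heq (comp f (comp g h)) (comp (comp f g) h).
Proof. exact: comp_assoc. Qed.

Definition Epi (a b : C) (e : hom a b) : Prop :=
  forall d (h h' : hom b d), heq (comp h e) (comp h' e) -> heq h h'.

Lemma epi_transport (a b a' b' : C) (e : hom a b) (p : hom a' b') (u : hom a a')
    (u' : hom a' a) (v : hom b b') (v' : hom b' b) :
  Epi p -> heq (comp v e) (comp p u) -> heq (comp u u') (idm a') -> heq (comp v' v) (idm b) ->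
  Epi e.
Proof.
move=> Ep Ev uu' v'v d h1 h2 E.
have K (h : hom b d) : heq (comp (comp h v') p) (comp (comp h e) u').
  rewrite -[p]compm1 -uu' -!compA (compA p u) -Ev -!compA (compA v' v) v'v comp1m.
  by rewrite !compA.
have E2 : heq (comp h1 v') (comp h2 v') by apply: Ep; rewrite !K E.
by rewrite -[h1]compm1 -v'v compA E2 -compA v'v compm1.
Qed.

(* Families such as [upd x k (x k)] agree with [x] only up to propositional equality of
   objects, which these identities absorb. *)
Definition idcast (a b : C) (e : a = b) : hom a b :=
  match e in _ = b' return hom a b' with erefl => idm a end.

Lemma idcast_pi (a b : C) (e e' : a = b) : idcast e = idcast e'.
Proof. by rewrite (proof_irrelevance _ e e'). Qed.

Lemma idcast_id (a : C) (e : a = a) : idcast e = idm a.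
Proof. by rewrite (proof_irrelevance _ e erefl). Qed.

Lemma idcast_comp (a b c : C) (e : a = b) (e' : b = c) :
  heq (comp (idcast e') (idcast e)) (idcast (etrans e e')).
Proof. by case: c / e'; case: b / e; apply: comp1m. Qed.

Lemma idcastKV (a b : C) (e : a = b) : heq (comp (idcast (esym e)) (idcast e)) (idm a).
Proof. by case: b / e; apply: comp1m. Qed.

Lemma idcastVK (a b : C) (e : a = b) : heq (comp (idcast e) (idcast (esym e))) (idm b).
Proof. by case: b / e; apply: comp1m. Qed.

End CatTheory.

Section PreaddTheory.
Context {A : PreAdd} {HA : IsPreadditive A}.

Lemma addmA (a b : A) (f g h : hom a b) : heq (add f (add g h)) (add (add f g) h).
Proof. exact: addA. Qed.

Lemma addmC (a b : A) (f g : hom a b) : heq (add f g) (add g f).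
Proof. exact: addC. Qed.

Lemma add0m (a b : A) (f : hom a b) : heq (add (zero a b) f) f.
Proof. exact: add0l. Qed.

Lemma addm0 (a b : A) (f : hom a b) : heq (add f (zero a b)) f.
Proof. by rewrite addmC add0m. Qed.

Lemma compDl (a b c : A) (f g : hom b c) (h : hom a b) :
  heq (comp (add f g) h) (add (comp f h) (comp g h)).
Proof. exact: comp_addl. Qed.

Lemma compDr (a b c : A) (h : hom b c) (f g : hom a b) :
  heq (comp h (add f g)) (add (comp h f) (comp h g)).
Proof. exact: comp_addr. Qed.

Lemma comp0m (a b c : A) (f : hom a b) : heq (comp (zero b c) f) (zero a c).
Proof. exact: pa_comp_zero_l. Qed.

Lemma compm0 (a b c : A) (f : hom b c) : heq (comp f (zero a b)) (zero a c).
Proof. exact: pa_comp_zero_r. Qed.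

Lemma addmI (a b : A) (x y z : hom a b) : heq (add x y) (add x z) -> heq y z.
Proof.
move=> E; have [u hu] := addN HA x.
by rewrite -[y]add0m -[z]add0m -hu (addmC x u) -!addmA E.
Qed.

Lemma eq0_addmm (a b : A) (x : hom a b) : heq x (add x x) -> heq x (zero a b).
Proof. by move=> E; apply: (@addmI _ _ x); rewrite -E addm0. Qed.

End PreaddTheory.

Section Updates.
Context {I : eqType} {C : I -> Cat} {HC : forall i, IsCat (C i)}.

Lemma updm_resp (x : forall i, C i) k (a b : C k) (f g : hom a b) :
  heq f g -> forall i, heq (updm x k f i) (updm x k g i).
Proof.
move=> E i; rewrite /updm /upd; case: (eq_comparable k i) => [e|ne] //.
by case: i / e.
Qed.

Lemma upd_self (x : forall i, C i) k i : x i = upd x k (x k) i.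
Proof. by rewrite /upd; case: (eq_comparable k i) => [e|//]; case: i / e. Qed.

Definition updf (s t : forall i, C i) (h : forall i, hom (s i) (t i)) k (g : hom (s k) (t k)) :
  forall i, hom (s i) (t i) := fun i =>
  match eq_comparable k i with
  | left e => match e in _ = i' return hom (s i') (t i') with erefl => g end
  | right _ => h i end.
Arguments updf {s t} h k g i.

Lemma updf_at (s t : forall i, C i) (h : forall i, hom (s i) (t i)) k g : updf h k g k = g.
Proof. by rewrite /updf; case: (eq_comparable k k) => [e|//]; rewrite (eq_axiomK e). Qed.

Lemma updf_ne (s t : forall i, C i) (h : forall i, hom (s i) (t i)) k g i :
  k != i -> updf h k g i = h i.
Proof. by rewrite /updf; case: (eq_comparable k i) => [e|//]; case: i / e; rewrite eqxx. Qed.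

End Updates.

Arguments updf {I C s t} h k g i.

Ltac case_upd k i :=
  rewrite /updm /upd; case: (eq_comparable k i) => [|];
  [let e := fresh "e" in move=> e; case: i / e; rewrite ?eqxx /=
  |let ne := fresh "ne" in move=> ne; rewrite ?(introF eqP ne)].

Ltac case_upd_ne k i ne :=
  rewrite /updm /upd; case: (eq_comparable k i) => [|_];
  [let e := fresh "e" in move=> e; by rewrite e eqxx in ne|].

Ltac case_upd_at k :=
  rewrite /updm /upd; case: (eq_comparable k k) => [|//];
  let e := fresh "e" in move=> e; rewrite (eq_axiomK e) /= ?eqxx.

Lemma cokernel_transport {B : PreAdd} {HB : IsPreadditive B}
    (a b c a' b' c' : B) (g : hom a b) (q : hom b c) (g' : hom a' b') (q' : hom b' c')
    (u : hom a' a) (u' : hom a a') (v : hom b' b) (v' : hom b b') (w : hom c c') (w' : hom c' c) :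
  heq (comp u u') (idm a) -> heq (comp v' v) (idm b') -> heq (comp v v') (idm b) ->
  heq (comp w' w) (idm c) -> heq (comp w w') (idm c') ->
  heq (comp v g') (comp g u) -> heq q' (comp w (comp q v)) ->
  IsCokernel g q -> IsCokernel g' q'.
Proof.
move=> uu' v'v vv' w'w ww' Hg Hq [Hz Hu]; split.
  by rewrite Hq -!compA Hg (compA q g u) Hz comp0m compm0.
move=> d h hg.
have h0 : heq (comp (comp h v') g) (zero a d).
  rewrite -[g]compm1 -uu' -!compA (compA g u) -Hg -!compA (compA v' v) v'v comp1m.
  by rewrite (compA h g') hg comp0m.
have [[t Ht] Hun] := Hu d _ h0; split.
  exists (comp t w'); rewrite Hq -!compA (compA w' w) w'w comp1m.
  by rewrite (compA t q) Ht -compA v'v compm1.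
move=> t1 t2 H1 H2.
have K t0 : heq (comp t0 q') h -> heq (comp (comp t0 w) q) (comp h v').
  by move=> <-; rewrite Hq -!compA vv' compm1.
have E := Hun _ _ (K _ H1) (K _ H2).
by rewrite -[t1]compm1 -ww' compA E -compA ww' compm1.
Qed.

Section MultiFunctor.
Context {I : eqType} {C : I -> PreAdd} {HC : forall i, IsPreadditive (C i)}.
Context {B : PreAdd} {HB : IsPreadditive B}.
Variables (F : MFun C B) (HF : IsMFunctor F).

Lemma fmap_resp (x y : forall i, C i) (f g : forall i, hom (x i) (y i)) :
  (forall i, heq (f i) (g i)) -> heq (Fmap F f) (Fmap F g).
Proof. by case: HF => resp _ _; apply: resp. Qed.

Lemma fmap_id (x : forall i, C i) (f : forall i, hom (x i) (x i)) :
  (forall i, heq (f i) (idm (x i))) -> heq (Fmap F f) (idm _).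
Proof. by move=> E; case: HF => _ fid _; rewrite -fid; apply: fmap_resp. Qed.

Lemma fmap_comp (x y z : forall i, C i) (f : forall i, hom (x i) (y i))
    (g : forall i, hom (y i) (z i)) (h : forall i, hom (x i) (z i)) :
  (forall i, heq (h i) (comp (g i) (f i))) -> heq (Fmap F h) (comp (Fmap F g) (Fmap F f)).
Proof. by move=> E; case: HF => _ _ fcomp; rewrite -fcomp; apply: fmap_resp. Qed.

Definition idcasts (x y : forall i, C i) (e : forall i, x i = y i) :
  forall i, hom (x i) (y i) := fun i => idcast (e i).

Lemma fmap_idcastsKV (x y : forall i, C i) (e : forall i, x i = y i) :
  heq (comp (Fmap F (idcasts (fun i => esym (e i)))) (Fmap F (idcasts e))) (idm _).
Proof.
rewrite -(fmap_comp (h := fun i => idm (x i))); first exact: fmap_id.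
by move=> i; rewrite idcastKV.
Qed.

Lemma fmap_idcastsVK (x y : forall i, C i) (e : forall i, x i = y i) :
  heq (comp (Fmap F (idcasts e)) (Fmap F (idcasts (fun i => esym (e i))))) (idm _).
Proof.
rewrite -(fmap_comp (h := fun i => idm (y i))); first exact: fmap_id.
by move=> i; rewrite idcastVK.
Qed.

Lemma fmap_idcasts_natural (x x' y y' : forall i, C i) (ex : forall i, x i = x' i)
    (ey : forall i, y i = y' i) (m : forall i, hom (x i) (y i)) (m' : forall i, hom (x' i) (y' i)) :
  (forall i, heq (comp (idcast (ey i)) (m i)) (comp (m' i) (idcast (ex i)))) ->
  heq (comp (Fmap F (idcasts ey)) (Fmap F m)) (comp (Fmap F m') (Fmap F (idcasts ex))).
Proof.
move=> E; rewrite -(fmap_comp (h := fun i => comp (idcast (ey i)) (m i))) //.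
by rewrite -(fmap_comp (h := fun i => comp (m' i) (idcast (ex i)))) //; apply: fmap_resp.
Qed.

(* Any family [u] agreeing with [h] off [k] factors through [updm x k (u k)]
   ([updback_factor]); this reduces [fmap_add_at] to [Multilinear]. *)
Definition updback (x y : forall i, C i) k (h : forall i, hom (x i) (y i)) :
  forall i, hom (upd x k (y k) i) (y i) := fun i =>
  match eq_comparable k i as d return
    hom (match d with left e => eq_rect k (fun j => ob (C j)) (y k) i e | right _ => x i end) (y i)
  with
  | left e => match e as e0 in _ = i' return hom (eq_rect k (fun j => ob (C j)) (y k) i' e0) (y i')
              with erefl => idm (y k) end
  | right _ => h i end.

Lemma updback_factor (x y : forall i, C i) k (h u : forall i, hom (x i) (y i)) :
  (forall i, k != i -> heq (u i) (h i)) ->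
  forall i, heq (u i) (comp (updback k h i) (comp (updm x k (u k) i) (idcast (upd_self x k i)))).
Proof.
move=> Hu i; move: (upd_self x k i); rewrite /updback /updm /upd.
case: (eq_comparable k i) => [e|ne] c.
  by move: c; case: i / e => c /=; rewrite idcast_id comp1m compm1.
by rewrite idcast_id comp1m compm1; apply: Hu; apply/eqP.
Qed.

Hypothesis HML : Multilinear F.

Lemma fmap_add_at (x y : forall i, C i) (f g h : forall i, hom (x i) (y i)) k :
  heq (h k) (add (f k) (g k)) -> (forall i, k != i -> heq (f i) (h i)) ->
  (forall i, k != i -> heq (g i) (h i)) ->
  heq (Fmap F h) (add (Fmap F f) (Fmap F g)).
Proof.
move=> Hk Hf Hg; set c := fun i => idcast (upd_self x k i).
have D (u : forall i, hom (x i) (y i)) : (forall i, k != i -> heq (u i) (h i)) ->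
    heq (Fmap F u) (comp (Fmap F (updback k h)) (comp (Fmap F (updm x k (u k))) (Fmap F c))).
  move=> Hu.
  rewrite -(fmap_comp (f := c) (g := updm x k (u k))
                      (h := fun i => comp (updm x k (u k) i) (c i))) //.
  rewrite -(fmap_comp (g := updback k h)
             (h := fun i => comp (updback k h i) (comp (updm x k (u k) i) (c i)))) //.
  by apply: fmap_resp; apply: updback_factor.
rewrite (D h) // (D f) // (D g) // -compDr -compDl -HML.
by apply: comp_Proper => //; apply: comp_Proper => //; apply: fmap_resp; apply: updm_resp.
Qed.

Lemma fmap_zero_at (x y : forall i, C i) (h : forall i, hom (x i) (y i)) k :
  heq (h k) (zero _ _) -> heq (Fmap F h) (zero _ _).
Proof.
move=> Hk; apply: eq0_addmm; apply: (fmap_add_at (k := k)) => //.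
by rewrite Hk add0m.
Qed.

Hypothesis HRE : RightExact F.

Lemma fmap_cokernel_at (x y z : forall i, C i) (f : forall i, hom (x i) (y i))
    (p : forall i, hom (y i) (z i)) k :
  IsCokernel (f k) (p k) ->
  (forall i, k != i -> exists e : x i = y i, heq (f i) (idcast e)) ->
  (forall i, k != i -> exists e : y i = z i, heq (p i) (idcast e)) ->
  IsCokernel (Fmap F f) (Fmap F p).
Proof.
move=> Hc Hf Hp.
have ex := upd_self x k.
have ey i : y i = upd x k (y k) i.
  rewrite /upd; case: (eq_comparable k i) => [e|ne]; first by case: i / e.
  by have [e _] := Hf i (introN eqP ne); apply: esym e.
have ez i : z i = upd x k (z k) i.
  rewrite /upd; case: (eq_comparable k i) => [e|ne]; first by case: i / e.
  have [e _] := Hf i (introN eqP ne); have [e' _] := Hp i (introN eqP ne).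
  exact: esym (etrans e e').
have cast_sq (s t : forall i, C i) (m : forall i, hom (s i) (t i)) (es : forall i, s i = _)
    (et : forall i, t i = _) :
    (forall i, k != i -> exists e : s i = t i, heq (m i) (idcast e)) ->
    forall i, heq (comp (idcast (et i)) (m i)) (comp (updm x k (m k) i) (idcast (es i))).
  move=> Hm i; move: (es i) (et i); rewrite /updm /upd.
  case: (eq_comparable k i) => [e|ne] c1 c2.
    by move: c1 c2; case: i / e => c1 c2 /=; rewrite !idcast_id comp1m compm1.
  have [e' ->] := Hm i (introN eqP ne); rewrite idcast_comp comp1m.
  by rewrite (idcast_pi (etrans e' c2) c1).
apply: (cokernel_transport (u := Fmap F (idcasts ex))
   (u' := Fmap F (idcasts (fun i => esym (ex i))))
   (v := Fmap F (idcasts ey)) (v' := Fmap F (idcasts (fun i => esym (ey i))))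
   (w := Fmap F (idcasts (fun i => esym (ez i)))) (w' := Fmap F (idcasts ez)) _ _ _ _ _ _ _
   (HRE x Hc)).
- exact: fmap_idcastsVK.
- exact: fmap_idcastsKV.
- exact: fmap_idcastsVK.
- exact: (fmap_idcastsVK ez).
- exact: (fmap_idcastsKV ez).
- by apply: fmap_idcasts_natural; apply: cast_sq.
- rewrite -(fmap_idcasts_natural (cast_sq _ _ _ ey ez Hp)) compA.
  by rewrite (fmap_idcastsKV ez) comp1m.
Qed.

End MultiFunctor.

Section JointCokernel.
Context {B : PreAdd} {HB : IsPreadditive B}.

Definition IsJointCokernel (J : Type) (P : J -> bool) (S : J -> B) (Y Z : B)
    (f : forall j, hom (S j) Y) (p : hom Y Z) : Prop :=
  (forall j, P j -> heq (comp p (f j)) (zero _ _)) /\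
  forall d (g : hom Y d), (forall j, P j -> heq (comp g (f j)) (zero _ _)) ->
    (exists h, heq (comp h p) g) /\
    (forall h h', heq (comp h p) g -> heq (comp h' p) g -> heq h h').

Variables (J : Type) (S : J -> B) (Y : B) (f : forall j, hom (S j) Y).

Lemma jcok_epi P Z (p : hom Y Z) : IsJointCokernel P f p -> Epi p.
Proof.
move=> [Hz Hu] d h h' E.
have K j : P j -> heq (comp (comp h p) (f j)) (zero _ _).
  by move=> Pj; rewrite -compA (Hz j Pj) compm0.
by have [_ U] := Hu d _ K; apply: U => //; rewrite E.
Qed.

Lemma jcok_factor P Z (p : hom Y Z) d (g : hom Y d) : IsJointCokernel P f p ->
  (forall j, P j -> heq (comp g (f j)) (zero _ _)) -> exists h, heq (comp h p) g.
Proof. by move=> [_ Hu] K; case: (Hu d g K). Qed.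

Lemma jcok_kill P Z (p : hom Y Z) j :
  IsJointCokernel P f p -> P j -> heq (comp p (f j)) (zero _ _).
Proof. by move=> [Hz _]; apply: Hz. Qed.

Lemma jcok_iso P Z (p : hom Y Z) (q : hom Z Y) : (forall j, ~~ P j) ->
  heq (comp q p) (idm Y) -> heq (comp p q) (idm Z) -> IsJointCokernel P f p.
Proof.
move=> NP qp pq; split=> [j|d g _]; first by rewrite (negbTE (NP j)).
split; first by exists (comp g q); rewrite -compA qp compm1.
by move=> h h' H1 H2; rewrite -[h]compm1 -pq compA H1 -H2 -compA pq compm1.
Qed.

Lemma jcok_eq_pred P Q Z (p : hom Y Z) :
  P =1 Q -> IsJointCokernel P f p -> IsJointCokernel Q f p.
Proof.
move=> E [Hz Hu]; split=> [j|d g K]; first by rewrite -E; apply: Hz.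
by apply: Hu => j; rewrite E; apply: K.
Qed.

Lemma jcok_transport P Z Z' (p : hom Y Z) (p' : hom Y Z') (w : hom Z Z') (w' : hom Z' Z) :
  IsJointCokernel P f p -> heq (comp w' w) (idm Z) -> heq (comp w w') (idm Z') ->
  heq p' (comp w p) -> IsJointCokernel P f p'.
Proof.
move=> [Hz Hu] w'w ww' Ep; split=> [j Pj|d g K].
  by rewrite Ep -compA (Hz j Pj) compm0.
have [[h Hh] U] := Hu d g K; split.
  by exists (comp h w'); rewrite Ep -compA (compA w') w'w comp1m.
move=> h1 h2 H1 H2.
have E : heq (comp h1 w) (comp h2 w) by apply: U; rewrite -compA -Ep.
by rewrite -[h1]compm1 -ww' compA E -compA ww' compm1.
Qed.

Lemma jcok_unique P Z Z' (p : hom Y Z) (p' : hom Y Z') :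
  IsJointCokernel P f p -> IsJointCokernel P f p' ->
  exists (h : hom Z Z') (h' : hom Z' Z), [/\ heq (comp h p) p', heq (comp h' p') p,
     heq (comp h' h) (idm Z) & heq (comp h h') (idm Z')].
Proof.
move=> Jp Jp'.
have [h Hh] := jcok_factor Jp (fun j => jcok_kill (j := j) Jp').
have [h' Hh'] := jcok_factor Jp' (fun j => jcok_kill (j := j) Jp).
exists h, h'; split=> //.
  by apply: (jcok_epi Jp); rewrite -compA Hh Hh' comp1m.
by apply: (jcok_epi Jp'); rewrite -compA Hh' Hh comp1m.
Qed.

End JointCokernel.

(* [g] need only cover [p \o f j0] up to the epimorphism [e]. *)
Lemma jcok_step {B : PreAdd} {HB : IsPreadditive B} (J : eqType) (S : J -> B) (Y : B)
    (f : forall j, hom (S j) Y) (P Q : J -> bool) (j0 : J) Z W T (p : hom Y Z)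
    (g : hom T Z) (q : hom Z W) (e : hom (S j0) T) :
  IsJointCokernel P f p -> IsCokernel g q -> Epi e -> heq (comp g e) (comp p (f j0)) ->
  (forall j, Q j = P j || (j == j0)) ->
  IsJointCokernel Q f (comp q p).
Proof.
move=> Jp [Gz Gu] Ee Ge HQ; split=> [j|d h K].
  rewrite HQ => /orP[Pj|/eqP ->].
    by rewrite -compA (jcok_kill Jp Pj) compm0.
  by rewrite -compA -Ge compA Gz comp0m.
have [t Ht] : exists t, heq (comp t p) h.
  by apply: (jcok_factor Jp) => j Pj; apply: K; rewrite HQ Pj.
have tg : heq (comp t g) (zero _ _).
  apply: Ee; rewrite comp0m -compA Ge compA Ht; apply: K.
  by rewrite HQ eqxx orbT.
have [[s Hs] U] := Gu d t tg; split; first by exists s; rewrite compA Hs.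
move=> h1 h2 H1 H2; apply: U.
  by apply: (jcok_epi Jp); rewrite -compA H1 Ht.
by apply: (jcok_epi Jp); rewrite -compA H2 Ht.
Qed.

Lemma jcok_exists {B : PreAdd} {HB : IsPreadditive B} (HBc : HasCokernels B) (n : nat)
    (S : 'I_n -> B) (Y : B) (f : forall j, hom (S j) Y) :
  exists Z (p : hom Y Z), IsJointCokernel predT f p.
Proof.
suff H m : m <= n -> exists Z (p : hom Y Z), IsJointCokernel (fun j : 'I_n => j < m) f p.
  have [Z [p Hp]] := H n (leqnn n).
  by exists Z, p; apply: jcok_eq_pred Hp => j; rewrite ltn_ord.
elim: m => [_|m IH Hm].
  by exists Y, (idm Y); apply: (jcok_iso f (q := idm Y)) => //; apply: comp1m.
have [Z [p Hp]] := IH (ltnW Hm).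
have [W [q Hq]] := HBc _ _ (comp p (f (Ordinal Hm))).
exists W, (comp q p); apply: (jcok_step (e := idm _) Hp Hq).
- by move=> d h h'; rewrite !compm1.
- by rewrite compm1.
- move=> j; rewrite ltnS leq_eqVlt orbC; congr (_ || _).
Qed.

Definition HasBiproducts (A : PreAdd) : Prop :=
  forall a b : A, exists (c : A) (p1 : hom c a) (p2 : hom c b) (i1 : hom a c) (i2 : hom b c),
    [/\ heq (comp p1 i1) (idm a), heq (comp p2 i2) (idm b),
        heq (comp p1 i2) (zero b a), heq (comp p2 i1) (zero a b)
      & heq (add (comp i1 p1) (comp i2 p2)) (idm c)].

Section FreydTheory.
Context {A : PreAdd} {HA : IsPreadditive A}.
Notation FR := (Freyd HA).

Lemma freyd_heq (X Y : FObj A) (f g : @hom FR X Y) :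
  heq (proj1_sig f) (proj1_sig g) -> heq f g.
Proof. by move=> E; exists (zero _ _); rewrite compm0 addm0. Qed.

Lemma Freyd_cat : IsCat FR.
Proof.
split.
- by move=> X Y f; apply: freyd_heq.
- move=> X Y f g [l Hl]; have [l' Hl'] := addN HA l; exists l'.
  by rewrite Hl -addmA -compDr Hl' compm0 addm0.
- by move=> X Y f g h [l1 H1] [l2 H2]; exists (add l2 l1); rewrite H1 H2 compDr addmA.
- move=> X Y Z f f' g g' [l Hl] [m Hm]; case: f' Hl => f' [w Hw] /= Hl.
  exists (add (comp l (proj1_sig g)) (comp w m)) => /=.
  rewrite Hl Hm compDl !compDr -!addmA !compA Hw.
  by apply: add_Proper => //; rewrite addmC -addmA.
- by move=> W X Y Z f g h; apply: freyd_heq; apply: compA.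
- by move=> X Y f; apply: freyd_heq; apply: comp1m.
- by move=> X Y f; apply: freyd_heq; apply: compm1.
Qed.

#[local] Existing Instance Freyd_cat.

Lemma Freyd_preadditive : IsPreadditive FR.
Proof.
split.
- exact: Freyd_cat.
- move=> X Y f f' g g' [l Hl] [m Hm]; exists (add l m) => /=.
  by rewrite Hl Hm compDr -!addmA (addmA (comp _ l)) (addmC (comp _ l)) -!addmA.
- by move=> X Y f g h; apply: freyd_heq; apply: addmA.
- by move=> X Y f g; apply: freyd_heq; apply: addmC.
- by move=> X Y f; apply: freyd_heq; apply: add0m.
- move=> X Y [f [w Hw]].
  have [u Hu] := addN HA f; have [w' Hw'] := addN HA w.
  have u_ok : exists w0, heq (comp u (Frho X)) (comp (Frho Y) w0).
    have e : heq (comp (Frho Y) (add w w')) (zero _ _) by rewrite Hw' compm0.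
    exists w'; rewrite -[comp u _]addm0 -e compDr addmA.
    by rewrite -Hw -compDl (addmC u f) Hu comp0m add0m.
  by exists (exist _ u u_ok); apply: freyd_heq.
- by move=> X Y Z f g h; apply: freyd_heq; apply: compDl.
- by move=> X Y Z h f g; apply: freyd_heq; apply: compDr.
Qed.

Definition freyd_emb (a : A) : FObj A :=
  existT _ a (existT (fun r => hom r a) a (zero a a)).

Lemma freyd_embm_ok (a b : A) (f : hom a b) :
  exists w : hom (Fr (freyd_emb a)) (Fr (freyd_emb b)),
    heq (comp f (Frho (freyd_emb a))) (comp (Frho (freyd_emb b)) w).
Proof. by exists (zero a b); rewrite /Frho /= compm0 comp0m. Qed.

Definition freyd_embm (a b : A) (f : hom a b) : @hom FR (freyd_emb a) (freyd_emb b) :=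
  exist _ f (freyd_embm_ok f).

Lemma freyd_embm_heq (a b : A) (f g : hom a b) : heq (freyd_embm f) (freyd_embm g) <-> heq f g.
Proof.
split; last by move=> E; apply: freyd_heq.
by case=> l /= ->; rewrite comp0m addm0.
Qed.

Lemma freyd_counit_ok (P : FObj A) : exists w : hom (Fr (freyd_emb (Fa P))) (Fr P),
  heq (comp (idm (Fa P)) (Frho (freyd_emb (Fa P)))) (comp (Frho P) w).
Proof. by exists (zero _ _); rewrite /Frho /= comp1m compm0. Qed.

Definition freyd_counit (P : FObj A) : @hom FR (freyd_emb (Fa P)) P :=
  exist _ (idm (Fa P)) (freyd_counit_ok P).

Lemma freyd_counit_cokernel (P : FObj A) :
  IsCokernel (C := FR) (freyd_embm (Frho P)) (freyd_counit P).
Proof.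
split; first by exists (idm _) => /=; rewrite comp1m compm1 add0m.
move=> D g [l Hl]; rewrite /= add0m in Hl.
have g_ok : exists w, heq (comp (proj1_sig g) (Frho P)) (comp (Frho D) w) by exists l.
split; first by exists (exist _ (proj1_sig g) g_ok); apply: freyd_heq; apply: compm1.
move=> h1 h2 H1 H2; have [l' /=] : heq (comp h1 (freyd_counit P)) (comp h2 (freyd_counit P)).
  by rewrite H1 H2.
by rewrite !compm1 => E; exists l'.
Qed.

(* The cokernel of [f] is [(Fa Q) <-(Frho Q, f)- (Fr Q (+) Fa P)], with the identity of
   [Fa Q] as projection; comparing [p] with it yields [s]. *)
Lemma freyd_cokernel_section (Hbi : HasBiproducts A) (P Q R : FObj A)
    (f : @hom FR P Q) (p : @hom FR Q R) :
  IsCokernel f p ->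
  exists s : hom (Fa R) (Fa Q),
   [/\ exists mu nu, heq (comp s (proj1_sig p))
                        (add (idm _) (add (comp (Frho Q) mu) (comp (proj1_sig f) nu))),
       exists t1 t2, heq (comp s (Frho R)) (add (comp (Frho Q) t1) (comp (proj1_sig f) t2)) &
       exists ka, heq (comp (proj1_sig p) s) (add (idm _) (comp (Frho R) ka))].
Proof.
move=> [pf0 Hu]; have [l Hl] := pf0; rewrite /= add0m in Hl.
set phi := proj1_sig f; set pi := proj1_sig p; have [wp Hwp] := proj2_sig p.
have [c [p1 [p2 [i1 [i2 [e1 e2 e3 e4 _]]]]]] := Hbi (Fr Q) (Fa P).
pose rq := add (comp (Frho Q) p1) (comp phi p2).
pose Q' : FObj A := existT _ (Fa Q) (existT (fun r => hom r (Fa Q)) c rq).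
have q_ok : exists w : hom (Fr Q) (Fr Q'), heq (comp (idm (Fa Q)) (Frho Q)) (comp (Frho Q') w).
  exists i1; rewrite /Frho /= /rq compDl -!compA e1 e4 compm1 compm0 addm0.
  exact: comp1m.
pose q : @hom FR Q Q' := exist _ (idm (Fa Q)) q_ok.
have qf : heq (comp q f) (@zero FR P Q').
  exists i2; rewrite /= add0m /rq compDl -!compA e3 e2 compm1 compm0 add0m.
  exact: comp1m.
have [[u [la Hla]] _] := Hu Q' q qf; rewrite /= in Hla.
have [w Hw] := proj2_sig u.
have v_ok : exists w0 : hom (Fr Q') (Fr R), heq (comp pi (Frho Q')) (comp (Frho R) w0).
  exists (add (comp wp p1) (comp l p2)).
  by rewrite /Frho /= /rq compDr compDr !compA -/pi Hwp Hl.
pose v : @hom FR Q' R := exist _ pi v_ok.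
exists (proj1_sig u); split.
- by exists (comp p1 la), (comp p2 la); rewrite Hla /Frho /= /rq compDl -!compA.
- by exists (comp p1 w), (comp p2 w); rewrite Hw /Frho /= /rq compDl -!compA.
- have vup : heq (comp (comp v u) p) p.
    exists (add (comp wp (comp p1 la)) (comp l (comp p2 la))) => /=.
    rewrite -compA Hla compDr compm1; apply: add_Proper => //.
    rewrite /Frho /= /rq compDl compDr -!compA (compA pi (Frho Q)) Hwp.
    by rewrite (compA pi phi) Hl compDr -!compA.
  have [_ U] := Hu R p pf0.
  have [ka Hka] := U _ _ vup (comp1m p); rewrite /= in Hka.
  by exists ka.
Qed.

End FreydTheory.

#[global] Existing Instance Freyd_cat.
#[global] Existing Instance Freyd_preadditive.

(* Families of maps between the targets of Freyd objects that are not Freyd morphisms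
   (such as a section of a cokernel) live here, so that [updm] applies to them. *)
Definition FreydUnderlying (A : PreAdd) : Cat := {|
  ob := FObj A; hom := fun P Q => hom (Fa P) (Fa Q);
  heq := fun P Q f g => heq f g; comp := fun P Q R g f => comp g f; idm := fun P => idm (Fa P) |}.

#[global] Instance FreydUnderlying_cat (A : PreAdd) {HA : IsPreadditive A} :
  IsCat (FreydUnderlying A).
Proof.
split=> /=.
- by move=> *; reflexivity.
- by move=> a b f g; apply: symmetry.
- by move=> a b f g h; apply: transitivity.
- by move=> a b c f f' g g' -> ->.
- by move=> *; apply: compA.
- by move=> *; apply: comp1m.
- by move=> *; apply: compm1.
Qed.

Section Extension.
Variables (n : nat) (A : 'I_n -> PreAdd) (HA : forall i, IsPreadditive (A i)).
Variables (B : PreAdd) (HB : IsPreadditive B) (HBc : HasCokernels B).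
#[local] Existing Instances HA HB.
Notation FA i := (Freyd (HA i)).
Variables (F : MFun A B) (HF : IsMFunctor F) (HML : Multilinear F).

Definition Fas (X : forall i, FObj (A i)) : forall i, A i := fun i => Fa (X i).

Definition rel_src j (X : forall i, FObj (A i)) : forall i, A i :=
  fun i => if j == i then Fr (X i) else Fa (X i).

Definition rel_at j (X : forall i, FObj (A i)) : forall i, hom (rel_src j X i) (Fas X i) :=
  fun i => match j == i as b return hom (if b then Fr (X i) else Fa (X i)) (Fa (X i)) with
           | true => Frho (X i) | false => idm _ end.

Definition relmap (X : forall i, FObj (A i)) j : hom (Fob F (rel_src j X)) (Fob F (Fas X)) :=
  Fmap F (rel_at j X).

Lemma ext_exists X : exists Z (p : hom (Fob F (Fas X)) Z), IsJointCokernel predT (relmap X) p.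
Proof. exact: jcok_exists. Qed.

Definition ext_obj X : B := proj1_sig (constructive_indefinite_description _ (ext_exists X)).

Definition ext_proj X : hom (Fob F (Fas X)) (ext_obj X) :=
  proj1_sig (constructive_indefinite_description _
    (proj2_sig (constructive_indefinite_description _ (ext_exists X)))).

Lemma ext_projP X : IsJointCokernel predT (relmap X) (ext_proj X).
Proof.
exact: (proj2_sig (constructive_indefinite_description _
  (proj2_sig (constructive_indefinite_description _ (ext_exists X))))).
Qed.

Lemma fmap_factor_relmap (Y : forall i, FObj (A i)) (s : forall i, A i)
    (m : forall i, hom (s i) (Fas Y i)) j (l : hom (s j) (Fr (Y j))) :
  heq (m j) (comp (Frho (Y j)) l) ->
  exists m' : forall i, hom (s i) (rel_src j Y i), heq (Fmap F m) (comp (relmap Y j) (Fmap F m')).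
Proof.
move=> Hl; pose lf := updf (t := fun i => Fr (Y i)) (fun i => zero (s i) (Fr (Y i))) j l.
exists (fun i => match j == i as b return hom (s i) (if b then Fr (Y i) else Fa (Y i)) with
         | true => lf i | false => m i end).
apply: fmap_comp => // i; rewrite /rel_at /rel_src /Fas; case: (eqVneq j i) => [e|ne].
  by case: i / e; rewrite /lf updf_at Hl.
by rewrite comp1m.
Qed.

Lemma ext_proj_kill X (s : forall i, A i) (m : forall i, hom (s i) (Fas X i)) j :
  (exists l : hom (s j) (Fr (X j)), heq (m j) (comp (Frho (X j)) l)) ->
  heq (comp (ext_proj X) (Fmap F m)) (zero _ _).
Proof.
move=> [l /fmap_factor_relmap [m' ->]].
by rewrite compA (jcok_kill (j := j) (ext_projP X)) // comp0m.
Qed.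

Lemma ext_proj_resp_at (Y : forall i, FObj (A i)) (s : forall i, A i)
    (m m' : forall i, hom (s i) (Fas Y i)) k (l : hom (s k) (Fr (Y k))) :
  heq (m k) (add (m' k) (comp (Frho (Y k)) l)) -> (forall i, k != i -> heq (m' i) (m i)) ->
  heq (comp (ext_proj Y) (Fmap F m)) (comp (ext_proj Y) (Fmap F m')).
Proof.
move=> Hk Hne.
have D : heq (Fmap F m) (add (Fmap F m') (Fmap F (updf m k (comp (Frho (Y k)) l)))).
  apply: (fmap_add_at HF HML (k := k)); rewrite ?updf_at //.
  by move=> i ne; rewrite updf_ne.
have K : heq (comp (ext_proj Y) (Fmap F (updf m k (comp (Frho (Y k)) l)))) (zero _ _).
  by apply: (ext_proj_kill (j := k)); exists l; rewrite updf_at.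
by rewrite D compDr K addm0.
Qed.

Lemma ext_proj_resp (Y : forall i, FObj (A i)) (s : forall i, A i)
    (m m' : forall i, hom (s i) (Fas Y i)) :
  (forall i, exists l, heq (m i) (add (m' i) (comp (Frho (Y i)) l))) ->
  heq (comp (ext_proj Y) (Fmap F m)) (comp (ext_proj Y) (Fmap F m')).
Proof.
move=> H; pose mix k := fun i : 'I_n => if i < k then m' i else m i.
suff S k : k <= n -> heq (comp (ext_proj Y) (Fmap F (mix k))) (comp (ext_proj Y) (Fmap F m)).
  rewrite -(S n (leqnn n)); apply: comp_Proper => //; apply: fmap_resp => // i.
  by rewrite /mix ltn_ord.
elim: k => [_|k IH Hk].
  by apply: comp_Proper => //; apply: fmap_resp => // i; rewrite /mix ltn0.
have [l Hl] := H (Ordinal Hk).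
rewrite -IH ?(ltnW Hk) //; symmetry.
apply: (ext_proj_resp_at (k := Ordinal Hk) (l := l)); first by rewrite /mix /= ltnSn ltnn.
move=> i ne; rewrite /mix ltnS leq_eqVlt.
suff /negbTE -> : nat_of_ord i != k by [].
by apply: contra ne => /eqP E; apply/eqP; apply: val_inj.
Qed.

Lemma ext_map_exists X Y (al : forall i, @hom (FA i) (X i) (Y i)) :
  exists h, heq (comp h (ext_proj X)) (comp (ext_proj Y) (Fmap F (fun i => proj1_sig (al i)))).
Proof.
apply: (jcok_factor (ext_projP X)) => j _.
rewrite -compA /relmap -(fmap_comp HF (h := fun i => comp (proj1_sig (al i)) (rel_at j X i))) //.
have [w Hw] := proj2_sig (al j).
apply: (ext_proj_kill (j := j)).
by rewrite /rel_at /rel_src eqxx; exists w.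
Qed.

Definition ext_map X Y (al : forall i, @hom (FA i) (X i) (Y i)) : hom (ext_obj X) (ext_obj Y) :=
  proj1_sig (constructive_indefinite_description _ (ext_map_exists al)).

Lemma ext_mapP X Y (al : forall i, @hom (FA i) (X i) (Y i)) :
  heq (comp (ext_map al) (ext_proj X)) (comp (ext_proj Y) (Fmap F (fun i => proj1_sig (al i)))).
Proof. exact: (proj2_sig (constructive_indefinite_description _ (ext_map_exists al))). Qed.

Lemma ext_map_unique X Y (al : forall i, @hom (FA i) (X i) (Y i)) h :
  heq (comp h (ext_proj X)) (comp (ext_proj Y) (Fmap F (fun i => proj1_sig (al i)))) ->
  heq h (ext_map al).
Proof. by move=> E; apply: (jcok_epi (ext_projP X)); rewrite E ext_mapP. Qed.

Definition Ext : MFun (fun i => FA i) B := @Build_MFun _ (fun i => FA i) B ext_obj ext_map.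

Lemma Ext_functor : IsMFunctor Ext.
Proof.
split=> /=.
- move=> X Y al be E; apply: ext_map_unique; rewrite ext_mapP; apply: ext_proj_resp => i.
  exact: (E i).
- move=> X; symmetry; apply: ext_map_unique; rewrite comp1m /=.
  by rewrite (fmap_id HF (f := fun i => idm (Fas X i))) // compm1.
- move=> X Y Z al be; symmetry; apply: ext_map_unique.
  rewrite -compA ext_mapP compA ext_mapP -compA.
  by rewrite -(fmap_comp HF (h := fun i => comp (proj1_sig (be i)) (proj1_sig (al i)))).
Qed.

Lemma Ext_multilinear : Multilinear Ext.
Proof.
move=> X k a b f g /=; symmetry; apply: ext_map_unique.
rewrite compDl !ext_mapP -compDr; apply: comp_Proper => //.
symmetry; apply: (fmap_add_at HF HML (k := k)).
- by rewrite /Fas; case_upd_at k.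
- by move=> i ne; rewrite /Fas; case_upd_ne k i ne.
- by move=> i ne; rewrite /Fas; case_upd_ne k i ne.
Qed.

Lemma ext_proj_absorb (Y Y' : forall i, FObj (A i)) (ft : forall i, hom (Fas Y' i) (Fas Y i))
    (s : forall i, A i) (m m' : forall i, hom (s i) (Fas Y i)) k d (g : hom (ext_obj Y) d) :
  heq (comp g (comp (ext_proj Y) (Fmap F ft))) (zero _ _) ->
  (forall i, k != i -> heq (m' i) (m i)) ->
  (forall i, k != i -> exists y : hom (s i) (Fas Y' i), heq (comp (ft i) y) (m i)) ->
  (exists (x : hom (s k) (Fr (Y k))) (y : hom (s k) (Fas Y' k)),
     heq (m k) (add (m' k) (add (comp (Frho (Y k)) x) (comp (ft k) y)))) ->
  heq (comp g (comp (ext_proj Y) (Fmap F m))) (comp g (comp (ext_proj Y) (Fmap F m'))).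
Proof.
move=> Hg Hne Hoff [x [yk Hk]].
have Hy i : exists y : hom (s i) (Fas Y' i), k != i -> heq (comp (ft i) y) (m i).
  by have [<-|/Hoff [y Hy]] := eqVneq k i; [exists yk | exists y].
pose y i := proj1_sig (constructive_indefinite_description _ (Hy i)).
have yP i : k != i -> heq (comp (ft i) (y i)) (m i).
  exact: (proj2_sig (constructive_indefinite_description _ (Hy i))).
pose y' := updf y k yk.
pose w := updf m k (add (comp (Frho (Y k)) x) (comp (ft k) yk)).
have Dm : heq (Fmap F m) (add (Fmap F m') (Fmap F w)).
  apply: (fmap_add_at HF HML (k := k)); rewrite /w ?updf_at //.
  by move=> i ne; rewrite updf_ne.
have Dw : heq (Fmap F w)
    (add (Fmap F (updf m k (comp (Frho (Y k)) x))) (Fmap F (fun i => comp (ft i) (y' i)))).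
  apply: (fmap_add_at HF HML (k := k)); rewrite /w /y' ?updf_at //.
  - by move=> i ne; rewrite !updf_ne.
  - by move=> i ne; rewrite !updf_ne // yP.
have Kx : heq (comp (ext_proj Y) (Fmap F (updf m k (comp (Frho (Y k)) x)))) (zero _ _).
  by apply: (ext_proj_kill (j := k)); exists x; rewrite updf_at.
have Ky : heq (comp g (comp (ext_proj Y) (Fmap F (fun i => comp (ft i) (y' i))))) (zero _ _).
  by rewrite (fmap_comp HF (f := y') (g := ft)) // !compA -(compA g) Hg comp0m.
by rewrite Dm Dw !compDr Kx compm0 add0m Ky addm0.
Qed.

Notation ul X k s := (@updm _ (fun i => FreydUnderlying (A i)) X k _ _ s).

Lemma sval_updm X k (P Q : FObj (A k)) (f : @hom (FA k) P Q) i :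
  heq (proj1_sig (updm X k f i)) (ul X k (proj1_sig f) i).
Proof. by rewrite /updm /upd; case: (eq_comparable k i) => [e|ne] //; case: i / e. Qed.

Lemma ext_map_updm X k (P Q : FObj (A k)) (f : @hom (FA k) P Q) :
  heq (comp (Fmap Ext (updm X k f)) (ext_proj (upd X k P)))
      (comp (ext_proj (upd X k Q)) (Fmap F (ul X k (proj1_sig f)))).
Proof.
rewrite /= ext_mapP; apply: comp_Proper => //; apply: fmap_resp => // i.
exact: sval_updm.
Qed.

(* For [g] killing [Ext f], [g \o ext_proj \o F s] kills the relations of the family at [R],
   and [F s] inverts [F p] modulo relations and the image of [f]. *)
Section RightExactness.
Variables (X : forall i, FObj (A i)) (k : 'I_n) (P Q R : FObj (A k)).
Variables (f : @hom (FA k) P Q) (p : @hom (FA k) Q R) (s : hom (Fa R) (Fa Q)).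
Let ft : forall i, hom (Fas (upd X k P) i) (Fas (upd X k Q) i) := ul X k (proj1_sig f).
Let pt : forall i, hom (Fas (upd X k Q) i) (Fas (upd X k R) i) := ul X k (proj1_sig p).
Let st : forall i, hom (Fas (upd X k R) i) (Fas (upd X k Q) i) := ul X k s.
Variables (d : B) (g : hom (ext_obj (upd X k Q)) d).
Hypothesis g_ft : heq (comp g (comp (ext_proj (upd X k Q)) (Fmap F ft))) (zero _ _).

Lemma ext_proj_section_kills_rels t1 t2 :
  heq (comp s (Frho R)) (add (comp (Frho Q) t1) (comp (proj1_sig f) t2)) ->
  forall j, heq (comp (comp g (comp (ext_proj (upd X k Q)) (Fmap F st)))
                      (relmap (upd X k R) j)) (zero _ _).
Proof.
move=> Hs j; rewrite /relmap -!compA.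
rewrite -(fmap_comp HF (h := fun i => comp (st i) (rel_at j (upd X k R) i))) //.
have [ekj|nkj] := eqVneq k j.
  case: j / ekj.
  pose m0 := updf (fun i => comp (st i) (rel_at k (upd X k R) i)) k (zero _ _).
  rewrite (ext_proj_absorb (k := k) (m' := m0) g_ft).
  - by rewrite (fmap_zero_at HF HML (k := k)) ?compm0 // /m0 updf_at.
  - by move=> i ne; rewrite /m0 updf_ne.
  - move=> i ne; rewrite /st /ft /Fas /rel_at /rel_src; case_upd_ne k i ne.
    by rewrite (negbTE ne); exists (idm _).
  rewrite /m0 updf_at /st /ft /Fas /rel_at /rel_src; case_upd_at k.
  by exists t1, t2; rewrite add0m.
rewrite (ext_proj_kill (j := j)) ?compm0 //.
move: nkj; rewrite /st /Fas /rel_at /rel_src; case_upd k j => // _.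
by rewrite eqxx; exists (idm _); rewrite /= comp1m compm1.
Qed.

Lemma ext_proj_section_proj mu nu :
  heq (comp s (proj1_sig p)) (add (idm _) (add (comp (Frho Q) mu) (comp (proj1_sig f) nu))) ->
  heq (comp g (comp (ext_proj (upd X k Q)) (comp (Fmap F st) (Fmap F pt))))
      (comp g (ext_proj (upd X k Q))).
Proof.
move=> Hs; rewrite -(fmap_comp HF (h := fun i => comp (st i) (pt i))) //.
rewrite (ext_proj_absorb (k := k) (m' := fun i => idm _) g_ft).
- by rewrite (fmap_id HF) // compm1.
- by move=> i ne; rewrite /st /pt /Fas; case_upd_ne k i ne; rewrite comp1m.
- by move=> i ne; rewrite /st /pt /ft /Fas; case_upd_ne k i ne; exists (idm _).
by rewrite /st /pt /ft /Fas; case_upd_at k; exists mu, nu.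
Qed.

End RightExactness.

Lemma ext_proj_proj_section X k (Q R : FObj (A k)) (p : @hom (FA k) Q R)
    (s : hom (Fa R) (Fa Q)) ka :
  heq (comp (proj1_sig p) s) (add (idm _) (comp (Frho R) ka)) ->
  heq (comp (ext_proj (upd X k R))
            (comp (Fmap F (ul X k (proj1_sig p))) (Fmap F (ul X k s))))
      (ext_proj (upd X k R)).
Proof.
move=> Hps.
rewrite -(fmap_comp HF (h := fun i => comp (ul X k (proj1_sig p) i) (ul X k s i))) //.
transitivity (comp (ext_proj (upd X k R)) (Fmap F (fun i => idm (Fas (upd X k R) i)))).
  apply: ext_proj_resp => i; rewrite /Fas; case_upd k i; first by exists ka.
  by exists (zero _ _); rewrite compm0 addm0 comp1m.
by rewrite (fmap_id HF) // compm1.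
Qed.

Lemma Ext_right_exact (Hbi : forall i, HasBiproducts (A i)) : RightExact Ext.
Proof.
move=> X k P Q R f p Hc.
have [s [[mu [nu Hs1]] [t1 [t2 Hs2]] [ka Hka]]] := freyd_cokernel_section (Hbi k) Hc.
have Ef := ext_map_updm X f; have Ep := ext_map_updm X p.
split.
  have [[l Hl] _] := Hc; rewrite /= add0m in Hl.
  apply: (jcok_epi (ext_projP (upd X k P))); rewrite comp0m -compA Ef compA Ep -compA.
  rewrite -(fmap_comp HF (h := fun i => comp (ul X k (proj1_sig p) i) (ul X k (proj1_sig f) i))) //.
  by apply: (ext_proj_kill (j := k)); rewrite /Fas; case_upd_at k; exists l.
move=> d g Hg.
have g_ft : heq (comp g (comp (ext_proj (upd X k Q)) (Fmap F (ul X k (proj1_sig f)))))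
                (zero _ _).
  by rewrite -Ef compA Hg comp0m.
have [h Hh] := jcok_factor (ext_projP (upd X k R))
                 (fun j _ => ext_proj_section_kills_rels g_ft Hs2 j).
split.
  exists h; apply: (jcok_epi (ext_projP (upd X k Q))).
  by rewrite -compA Ep compA Hh -!compA (ext_proj_section_proj g_ft Hs1).
move=> h1 h2 H1 H2.
have Hfac (h' : hom (ext_obj (upd X k R)) d) :
    heq (comp h' (ext_proj (upd X k R)))
        (comp (comp h' (comp (Fmap Ext (updm X k p)) (ext_proj (upd X k Q))))
              (Fmap F (ul X k s))).
  by rewrite Ep -!compA (ext_proj_proj_section X Hka).
by apply: (jcok_epi (ext_projP (upd X k R))); rewrite !Hfac !compA H1 H2.
Qed.

End Extension.

Section Restriction.
Variables (n : nat) (A : 'I_n -> PreAdd) (HA : forall i, IsPreadditive (A i)).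
Variables (B : PreAdd) (HB : IsPreadditive B).
#[local] Existing Instances HA HB.
Notation FA i := (Freyd (HA i)).

Definition Res (H : MFun (fun i => FA i) B) : MFun A B :=
  @Build_MFun _ A B (fun x => Fob H (fun i => freyd_emb (x i)))
    (fun x y f => Fmap H (fun i => freyd_embm (f i))).

Variables (H : MFun (fun i => FA i) B) (HH : IsMFunctor H).

Lemma Res_functor : IsMFunctor (Res H).
Proof.
split=> /=.
- by move=> x y f g E; apply: (fmap_resp HH) => i; apply/freyd_embm_heq.
- by move=> x; apply: (fmap_id HH) => i; apply: freyd_heq.
- by move=> x y z f g; apply: (fmap_comp HH) => i; apply: freyd_heq.
Qed.

Hypothesis HML : Multilinear H.

Lemma Res_multilinear : Multilinear (Res H).
Proof.
move=> x k a b f g /=; apply: (fmap_add_at HH HML (k := k)).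
- by apply: freyd_heq; case_upd_at k.
- by move=> i ne; case_upd_ne k i ne.
- by move=> i ne; case_upd_ne k i ne.
Qed.

Hypothesis HRE : RightExact H.

Definition freyd_trunc m (X : forall i, FObj (A i)) : forall i, FObj (A i) :=
  fun i => if i < m then X i else freyd_emb (Fa (X i)).

Definition trunc_counit m (X : forall i, FObj (A i)) :
  forall i, @hom (FA i) (freyd_emb (Fa (X i))) (freyd_trunc m X i) := fun i =>
  match i < m as b return @hom (FA i) (freyd_emb (Fa (X i))) (if b then X i else freyd_emb (Fa (X i)))
  with
  | true => freyd_counit (X i) | false => idm _ end.

Lemma trunc_counit0_jcok X :
  IsJointCokernel (fun j : 'I_n => j < 0) (relmap (Res H) X) (Fmap H (trunc_counit 0 X)).
Proof.
pose inv0 i : @hom (FA i) (freyd_trunc 0 X i) (freyd_emb (Fa (X i))) :=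
  match i < 0 as b return @hom (FA i) (if b then X i else freyd_emb (Fa (X i))) (freyd_emb (Fa (X i)))
  with
  | true => zero _ _ | false => idm _ end.
apply: (jcok_iso _ (q := Fmap H inv0)) => //.
- rewrite -(fmap_comp HH (h := fun i => comp (inv0 i) (trunc_counit 0 X i))) //.
  by apply: (fmap_id HH) => i; apply: comp1m.
- rewrite -(fmap_comp HH (h := fun i => comp (trunc_counit 0 X i) (inv0 i))) //.
  by apply: (fmap_id HH) => i; apply: comp1m.
Qed.

Section TruncStep.
Variables (m : nat) (k : 'I_n) (Hk : nat_of_ord k = m).
Hypothesis IH : forall X,
  IsJointCokernel (fun j : 'I_n => j < m) (relmap (Res H) X) (Fmap H (trunc_counit m X)).
Variable X : forall i, FObj (A i).

Let k_ltm : (k < m) = false. Proof. by rewrite Hk ltnn. Qed.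
Let k_ltSm : (k < m.+1) = true. Proof. by rewrite Hk ltnSn. Qed.

(* From [m] to [m.+1], component [k = m] of [X] is presented as the cokernel of
   [freyd_embm (Frho (X k))]; the [k < m] branches below are unreachable. *)
Definition step_src : forall i, FObj (A i) :=
  fun i => if k == i then freyd_emb (Fr (X i)) else freyd_trunc m X i.

Definition step_rel : forall i, @hom (FA i) (step_src i) (freyd_trunc m X i) := fun i =>
  match k == i as c return
    @hom (FA i) (if c then freyd_emb (Fr (X i)) else freyd_trunc m X i) (freyd_trunc m X i) with
  | true => match i < m as b return
              @hom (FA i) (freyd_emb (Fr (X i))) (if b then X i else freyd_emb (Fa (X i))) with
            | true => zero _ _ | false => freyd_embm (Frho (X i)) end
  | false => idm _ end.

Definition step_counit : forall i, @hom (FA i) (freyd_trunc m X i) (freyd_trunc m.+1 X i) :=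
  fun i =>
  match i < m as b1 return
    @hom (FA i) (if b1 then X i else freyd_emb (Fa (X i))) (freyd_trunc m.+1 X i) with
  | true => match i < m.+1 as b2 return
              @hom (FA i) (X i) (if b2 then X i else freyd_emb (Fa (X i))) with
            | true => idm _ | false => zero _ _ end
  | false => match i < m.+1 as b2 return
               @hom (FA i) (freyd_emb (Fa (X i))) (if b2 then X i else freyd_emb (Fa (X i))) with
             | true => freyd_counit (X i) | false => idm _ end end.

Definition step_lift : forall i, @hom (FA i) (freyd_emb (rel_src k X i)) (step_src i) := fun i =>
  match k == i as c return @hom (FA i) (freyd_emb (if c then Fr (X i) else Fa (X i)))
                                     (if c then freyd_emb (Fr (X i)) else freyd_trunc m X i) with
  | true => idm _ | false => trunc_counit m X i end.

Lemma step_cokernel : IsCokernel (Fmap H step_rel) (Fmap H step_counit).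
Proof.
apply: (fmap_cokernel_at HH HRE (k := k)).
- by rewrite /step_rel /step_counit /step_src /freyd_trunc eqxx k_ltm k_ltSm /=;
    apply: freyd_counit_cokernel.
- by move=> i /negbTE ne; rewrite /step_rel /step_src ne; exists erefl.
- move=> i ne; have E : (i < m.+1) = (i < m).
    rewrite ltnS leq_eqVlt; case: eqP => //= E; case/negP: ne; apply/eqP.
    by apply: val_inj; rewrite /= Hk E.
  by rewrite /step_counit /freyd_trunc E; case: (i < m); exists erefl.
Qed.

Lemma step_rel_lift : heq (comp (Fmap H step_rel) (Fmap H step_lift))
                          (comp (Fmap H (trunc_counit m X)) (relmap (Res H) X k)).
Proof.
rewrite -(fmap_comp HH (h := fun i => comp (step_rel i) (step_lift i))) //.
rewrite /relmap /= -(fmap_comp HH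
  (h := fun i => comp (trunc_counit m X i) (freyd_embm (rel_at k X i)))) //.
apply: (fmap_resp HH) => i; apply: freyd_heq.
rewrite /step_rel /step_lift /trunc_counit /rel_at /rel_src /step_src /freyd_trunc.
have [e|ne] := eqVneq k i; last by rewrite /= comp1m compm1.
by case: i / e; rewrite k_ltm /= comp1m compm1.
Qed.

(* [step_lift] is [trunc_counit m] for [X] with its [k]-th component replaced by the free
   object on [Fr (X k)], up to casts; hence it is epi by the induction hypothesis. *)
Lemma step_lift_epi : Epi (Fmap H step_lift).
Proof.
pose Xk i := if k == i then freyd_emb (Fr (X i)) else X i.
have eS i : @eq (ob (FA i)) (freyd_emb (rel_src k X i)) (freyd_emb (Fa (Xk i))).
  by rewrite /rel_src /Xk; case: (k == i).
have eW i : @eq (ob (FA i)) (step_src i) (freyd_trunc m Xk i).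
  rewrite /step_src /freyd_trunc /Xk; have [e|ne] // := eqVneq k i.
  by case: i / e; rewrite k_ltm.
have Sq : heq (comp (Fmap H (idcasts eW)) (Fmap H step_lift))
              (comp (Fmap H (trunc_counit m Xk)) (Fmap H (idcasts eS))).
  apply: (fmap_idcasts_natural HH) => i; move: (eW i) (eS i).
  rewrite /step_src /freyd_trunc /Xk /step_lift /trunc_counit /rel_src.
  have [e|ne] := eqVneq k i.
    by case: i / e; rewrite k_ltm => c1 c2; rewrite !idcast_id.
  by move=> c1 c2; rewrite !idcast_id comp1m compm1.
apply: (epi_transport (jcok_epi (IH Xk)) Sq).
- exact: (fmap_idcastsVK HH eS).
- exact: (fmap_idcastsKV HH eW).
Qed.

Lemma trunc_counitS_jcok :
  IsJointCokernel (fun j : 'I_n => j < m.+1) (relmap (Res H) X) (Fmap H (trunc_counit m.+1 X)).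
Proof.
apply: (jcok_transport (w := idm _) (w' := idm _)
          (jcok_step (IH X) step_cokernel step_lift_epi step_rel_lift _)).
- move=> j; rewrite ltnS leq_eqVlt orbC; congr (_ || _).
  by apply/eqP/eqP => [E|->]; [apply: val_inj; rewrite /= E Hk|].
- exact: comp1m.
- exact: comp1m.
rewrite comp1m -(fmap_comp HH (h := fun i => comp (step_counit i) (trunc_counit m X i))) //.
apply: (fmap_resp HH) => i; rewrite /step_counit /trunc_counit /freyd_trunc.
case E1: (i < m); case E2: (i < m.+1).
- by rewrite comp1m.
- by rewrite ltnS ltnW ?E1 in E2.
- by rewrite compm1.
- by rewrite comp1m.
Qed.

End TruncStep.

Lemma trunc_counit_jcok m : m <= n -> forall X,
  IsJointCokernel (fun j : 'I_n => j < m) (relmap (Res H) X) (Fmap H (trunc_counit m X)).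
Proof.
elim: m => [_ X|m IHm Hm X]; first exact: trunc_counit0_jcok.
exact: (trunc_counitS_jcok (k := Ordinal Hm) erefl (IHm (ltnW Hm))).
Qed.

Definition counits (X : forall i, FObj (A i)) :
  forall i, @hom (FA i) (freyd_emb (Fa (X i))) (X i) := fun i => freyd_counit (X i).

Lemma counits_jcok X : IsJointCokernel predT (relmap (Res H) X) (Fmap H (counits X)).
Proof.
have cz i : @eq (ob (FA i)) (freyd_trunc n X i) (X i) by rewrite /freyd_trunc ltn_ord.
apply: (jcok_transport (w := Fmap H (idcasts cz)) (w' := Fmap H (idcasts (fun i => esym (cz i))))).
- by apply: jcok_eq_pred (trunc_counit_jcok (leqnn n) X) => j; rewrite ltn_ord.
- exact: (fmap_idcastsKV HH cz).
- exact: (fmap_idcastsVK HH cz).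
- rewrite -(fmap_comp HH (h := fun i => comp (idcast (cz i)) (trunc_counit n X i))) //.
  apply: (fmap_resp HH) => i; move: (cz i); rewrite /freyd_trunc /trunc_counit ltn_ord => c.
  by rewrite idcast_id comp1m.
Qed.

End Restriction.

Section ExtensionNT.
Variables (n : nat) (A : 'I_n -> PreAdd).
Variables (B : PreAdd) (HB : IsPreadditive B) (HBc : HasCokernels B).
#[local] Existing Instance HB.
Variables (F F' : MFun A B) (t : NT F F').
Notation E := (ext_proj HB HBc).

Lemma ext_nt_exists X :
  exists h, heq (comp h (E F X)) (comp (E F' X) (proj1_sig t (Fas X))).
Proof.
apply: (jcok_factor (ext_projP HB HBc F X)) => j _.
rewrite -compA /relmap (proj2_sig t) compA.
by rewrite (jcok_kill (j := j) (ext_projP HB HBc F' X)) // comp0m.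
Qed.

Definition ext_nt X : hom (ext_obj HB HBc F X) (ext_obj HB HBc F' X) :=
  proj1_sig (constructive_indefinite_description _ (ext_nt_exists X)).

Lemma ext_ntP X : heq (comp (ext_nt X) (E F X)) (comp (E F' X) (proj1_sig t (Fas X))).
Proof. exact: (proj2_sig (constructive_indefinite_description _ (ext_nt_exists X))). Qed.

Lemma ext_nt_unique X h :
  heq (comp h (E F X)) (comp (E F' X) (proj1_sig t (Fas X))) -> heq h (ext_nt X).
Proof. by move=> Eh; apply: (jcok_epi (ext_projP HB HBc F X)); rewrite Eh ext_ntP. Qed.

End ExtensionNT.

Section Equivalence.
Variables (n : nat) (A : 'I_n -> PreAdd) (HA : forall i, IsPreadditive (A i)).
Hypothesis Hbi : forall i, HasBiproducts (A i).
Variables (B : PreAdd) (HB : IsPreadditive B) (HBc : HasCokernels B).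
#[local] Existing Instances HA HB.
Notation FA i := (Freyd (HA i)).
Notation Lin := (LinCat A (pa_cat HB)).
Notation LinCok := (LinCokCat (fun i => FA i) (pa_cat HB)).
Notation E F := (ext_proj HB HBc F).

Definition ext_ob (F : ob Lin) : ob LinCok :=
  let HF := proj1 (proj2_sig F) in let HML := proj2 (proj2_sig F) in
  exist _ (Ext HA HB HBc HF)
    (And3 (Ext_functor HA HB HBc HF HML) (Ext_multilinear HB HBc HF HML)
          (Ext_right_exact HB HBc HF HML Hbi)).

Lemma ext_hom_natural (F F' : ob Lin) (t : hom F F') (X Y : forall i, ob (FA i))
    (al : forall i, hom (X i) (Y i)) :
  heq (comp (ext_nt HB HBc t Y) (Fmap (proj1_sig (ext_ob F)) al))
      (comp (Fmap (proj1_sig (ext_ob F')) al) (ext_nt HB HBc t X)).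
Proof.
move=> /=; apply: (jcok_epi (ext_projP HB HBc (proj1_sig F) X)).
rewrite -!compA ext_mapP (compA (ext_nt _ _ t Y)) ext_ntP -compA (proj2_sig t).
by rewrite ext_ntP (compA (ext_map _ _ _ al)) ext_mapP -compA.
Qed.

Definition ext_hom (F F' : ob Lin) (t : hom F F') : hom (ext_ob F) (ext_ob F') :=
  exist _ (fun X => ext_nt HB HBc t X) (ext_hom_natural t).

Definition ext_fun : Functor Lin LinCok := @Build_Functor Lin LinCok ext_ob ext_hom.

Lemma ext_fun_functor : IsFunctor ext_fun.
Proof.
split=> /=.
- by move=> F F' t t' Htt' X; apply: ext_nt_unique; rewrite ext_ntP (Htt' (Fas X)).
- by move=> F X; symmetry; apply: ext_nt_unique; rewrite comp1m compm1.
- move=> F1 F2 F3 t t' X; symmetry; apply: ext_nt_unique.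
  by rewrite -compA ext_ntP compA ext_ntP -compA.
Qed.

Lemma res_ob_ok (H : ob LinCok) : IsMFunctor (Res (proj1_sig H)) /\ Multilinear (Res (proj1_sig H)).
Proof. by case: (proj2_sig H) => HH HML _; split; [apply: Res_functor | apply: Res_multilinear]. Qed.

Definition res_ob (H : ob LinCok) : ob Lin := exist _ (Res (proj1_sig H)) (res_ob_ok H).

Lemma res_hom_natural (H H' : ob LinCok) (t : hom H H') (x y : forall i, A i)
    (f : forall i, hom (x i) (y i)) :
  heq (comp (proj1_sig t (fun i => freyd_emb (y i))) (Fmap (proj1_sig (res_ob H)) f))
      (comp (Fmap (proj1_sig (res_ob H')) f) (proj1_sig t (fun i => freyd_emb (x i)))).
Proof. exact: (proj2_sig t). Qed.

Definition res_hom (H H' : ob LinCok) (t : hom H H') : hom (res_ob H) (res_ob H') :=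
  exist _ (fun x => proj1_sig t (fun i => freyd_emb (x i))) (res_hom_natural t).

Definition res_fun : Functor LinCok Lin := @Build_Functor LinCok Lin res_ob res_hom.

Lemma res_fun_functor : IsFunctor res_fun.
Proof. by split=> /= [H H' t t' Htt x|//|//]; apply: Htt. Qed.

(* On free objects all the relations vanish, so the extension does not change [F]. *)
Lemma ext_proj_free_retraction (F : ob Lin) (x : forall i, A i) :
  exists h : hom (ext_obj HB HBc (proj1_sig F) (fun i => freyd_emb (x i))) (Fob (proj1_sig F) x),
    heq (comp h (E (proj1_sig F) (fun i => freyd_emb (x i)))) (idm _).
Proof.
case: (proj2_sig F) => HF HML.
apply: (jcok_factor (ext_projP HB HBc (proj1_sig F) (fun i => freyd_emb (x i)))) => j _.
rewrite comp1m /relmap; apply: (fmap_zero_at HF HML (k := j)).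
by rewrite /rel_at /rel_src eqxx.
Qed.

Definition res_ext_counit_at (F : ob Lin) x :=
  proj1_sig (constructive_indefinite_description _ (ext_proj_free_retraction F x)).

Lemma res_ext_counit_atP (F : ob Lin) x :
  heq (comp (res_ext_counit_at F x) (E (proj1_sig F) (fun i => freyd_emb (x i)))) (idm _).
Proof. exact: (proj2_sig (constructive_indefinite_description _ (ext_proj_free_retraction F x))). Qed.

Lemma res_ext_counit_natural (F : ob Lin) (x y : forall i, A i) (f : forall i, hom (x i) (y i)) :
  heq (comp (res_ext_counit_at F y) (Fmap (proj1_sig (res_ob (ext_ob F))) f))
      (comp (Fmap (proj1_sig F) f) (res_ext_counit_at F x)).
Proof.
move=> /=; apply: (jcok_epi (ext_projP HB HBc (proj1_sig F) (fun i => freyd_emb (x i)))).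
by rewrite -!compA ext_mapP (compA (res_ext_counit_at F y)) !res_ext_counit_atP comp1m compm1.
Qed.

Definition res_ext_counit (F : ob Lin) : hom (fo res_fun (fo ext_fun F)) F :=
  exist _ (res_ext_counit_at F) (res_ext_counit_natural F).

Lemma res_ext_unit_natural (F : ob Lin) (x y : forall i, A i) (f : forall i, hom (x i) (y i)) :
  heq (comp (E (proj1_sig F) (fun i => freyd_emb (y i))) (Fmap (proj1_sig F) f))
      (comp (Fmap (proj1_sig (res_ob (ext_ob F))) f) (E (proj1_sig F) (fun i => freyd_emb (x i)))).
Proof. by rewrite /= ext_mapP. Qed.

Definition res_ext_unit (F : ob Lin) : hom F (fo res_fun (fo ext_fun F)) :=
  exist _ (fun x => E (proj1_sig F) (fun i => freyd_emb (x i))) (res_ext_unit_natural F).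

Lemma res_ext_iso : NatIsoId ext_fun res_fun.
Proof.
exists res_ext_counit; split.
  move=> F; exists (res_ext_unit F); split=> x /=; first exact: res_ext_counit_atP.
  apply: (jcok_epi (ext_projP HB HBc (proj1_sig F) (fun i => freyd_emb (x i)))).
  by rewrite -compA res_ext_counit_atP compm1 comp1m.
move=> F F' t x /=.
apply: (jcok_epi (ext_projP HB HBc (proj1_sig F) (fun i => freyd_emb (x i)))).
by rewrite -!compA res_ext_counit_atP compm1 ext_ntP compA res_ext_counit_atP comp1m.
Qed.

(* For right exact [H], both [ext_proj] and [H] applied to the counits are joint cokernels of
   the relations of [X]. *)
Lemma ext_res_comparison (H : ob LinCok) (X : forall i, ob (FA i)) :
  exists (h : hom (ext_obj HB HBc (Res (proj1_sig H)) X) (Fob (proj1_sig H) X)) h',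
    [/\ heq (comp h (E (Res (proj1_sig H)) X)) (Fmap (proj1_sig H) (counits HA X)),
        heq (comp h' (Fmap (proj1_sig H) (counits HA X))) (E (Res (proj1_sig H)) X),
        heq (comp h' h) (idm _) & heq (comp h h') (idm _)].
Proof.
case: (proj2_sig H) => HH _ HRE.
exact: jcok_unique _ (ext_projP HB HBc (Res (proj1_sig H)) X) (counits_jcok HB HH HRE X).
Qed.

Definition ext_res_counit_at (H : ob LinCok) X :=
  proj1_sig (constructive_indefinite_description _ (ext_res_comparison H X)).

Definition ext_res_unit_at (H : ob LinCok) X :=
  proj1_sig (constructive_indefinite_description _
    (proj2_sig (constructive_indefinite_description _ (ext_res_comparison H X)))).

Lemma ext_res_comparisonP (H : ob LinCok) X :
  [/\ heq (comp (ext_res_counit_at H X) (E (Res (proj1_sig H)) X))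
          (Fmap (proj1_sig H) (counits HA X)),
      heq (comp (ext_res_unit_at H X) (Fmap (proj1_sig H) (counits HA X)))
          (E (Res (proj1_sig H)) X),
      heq (comp (ext_res_unit_at H X) (ext_res_counit_at H X)) (idm _)
    & heq (comp (ext_res_counit_at H X) (ext_res_unit_at H X)) (idm _)].
Proof.
exact: (proj2_sig (constructive_indefinite_description _
  (proj2_sig (constructive_indefinite_description _ (ext_res_comparison H X))))).
Qed.

Lemma ext_res_counit_natural (H : ob LinCok) (X Y : forall i, ob (FA i))
    (al : forall i, hom (X i) (Y i)) :
  heq (comp (ext_res_counit_at H Y) (Fmap (proj1_sig (ext_ob (res_ob H))) al))
      (comp (Fmap (proj1_sig H) al) (ext_res_counit_at H X)).
Proof.
have [cX _ _ _] := ext_res_comparisonP H X; have [cY _ _ _] := ext_res_comparisonP H Y.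
case: (proj2_sig H) => HH _ _ /=; apply: (jcok_epi (ext_projP HB HBc (Res (proj1_sig H)) X)).
rewrite -!compA ext_mapP (compA (ext_res_counit_at H Y)) cY cX /=.
rewrite -(fmap_comp HH (h := fun i => comp (counits HA Y i) (freyd_embm (proj1_sig (al i))))) //.
rewrite -(fmap_comp HH (h := fun i => comp (al i) (counits HA X i))) //.
by apply: (fmap_resp HH) => i; apply: freyd_heq; rewrite /= comp1m compm1.
Qed.

Definition ext_res_counit (H : ob LinCok) : hom (fo ext_fun (fo res_fun H)) H :=
  exist _ (ext_res_counit_at H) (ext_res_counit_natural H).

Lemma ext_res_unit_natural (H : ob LinCok) (X Y : forall i, ob (FA i))
    (al : forall i, hom (X i) (Y i)) :
  heq (comp (ext_res_unit_at H Y) (Fmap (proj1_sig H) al))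
      (comp (Fmap (proj1_sig (ext_ob (res_ob H))) al) (ext_res_unit_at H X)).
Proof.
have [_ _ _ cuX] := ext_res_comparisonP H X; have [_ _ uY _] := ext_res_comparisonP H Y.
rewrite -[comp (ext_res_unit_at H Y) _]compm1 -cuX -!compA (compA (Fmap _ al)).
by rewrite -(ext_res_counit_natural H al) -!compA (compA (ext_res_unit_at H Y)) uY comp1m.
Qed.

Definition ext_res_unit (H : ob LinCok) : hom H (fo ext_fun (fo res_fun H)) :=
  exist _ (ext_res_unit_at H) (ext_res_unit_natural H).

Lemma ext_res_iso : NatIsoId res_fun ext_fun.
Proof.
exists ext_res_counit; split.
  by move=> H; exists (ext_res_unit H); split=> X /=; case: (ext_res_comparisonP H X).
move=> H H' t X /=.
have [cX _ _ _] := ext_res_comparisonP H X; have [cX' _ _ _] := ext_res_comparisonP H' X.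
apply: (jcok_epi (ext_projP HB HBc (Res (proj1_sig H)) X)).
by rewrite -!compA cX ext_ntP compA cX' /=; apply: (proj2_sig t _ _ (counits HA X)).
Qed.

Lemma lin_lincok_equiv : CatEquiv Lin LinCok.
Proof.
exists ext_fun, res_fun.
by split; [apply: ext_fun_functor | apply: res_fun_functor | apply: res_ext_iso | apply: ext_res_iso].
Qed.

End Equivalence.

Theorem theorem2p9 (n : nat) (A : 'I_n -> PreAdd) (HA : forall i, IsAdditive (A i))
  (B : PreAdd) (HB : IsAdditive B) (HBc : HasCokernels B) :
  CatEquiv (LinCat A (pa_cat (ad_pre HB)))
           (LinCokCat (fun i => Freyd (ad_pre (HA i))) (pa_cat (ad_pre HB))).
Proof.
exact: (@lin_lincok_equiv n A (fun i => ad_pre (HA i)) (fun i => ad_biprod (HA i))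
          B (ad_pre HB) HBc).
Qed.
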